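(* Let $C_5$ be the simplicial complex on vertex set $\mathbb{Z}_5=\{1,2,3,4,5\}$ whose maximal faces are $\{i,i+1\}$, $i\in\mathbb{Z}_5$ (the boundary complex dual to a pentagon $P_5$). For $d\in\mathbb{Z}$ let \[\lambda_d=\begin{pmatrix}1&0&-1&-1&d\\0&1&1&0&-1\end{pmatrix},\] and for $i\in\mathbb{Z}_5$ say that $\lambda_d$ has type $(i,d)$ when its columns are assigned, from left to right, to the vertices $i+1,i+2,i+3,i+4,i$. Then every $\lambda_d$ of any type is a complete non-singular fan-giving characteristic map over $C_5$, and every complete non-singular fan over $C_5$ (i.e. every fan-giving complete non-singular characteristic map $\lambda:\mathbb{Z}_5\to\mathbb{Z}^2$ over $C_5$) is, up to change of basis of $\mathbb{Z}^2$, of type $(i,d)$ for some $(i,d)\in\mathbb{Z}_5\times\mathbb{Z}$. The Davis–Januszkiewicz classes $(i,d)$ are pairwise distinct except for the five coincidences $(i,0)=(i+1,1)$, $i\in\mathbb{Z}_5$.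
   Context: A characteristic map of dimension 2 over $C_5$ is a map $\lambda:\mathbb{Z}_5\to\mathbb{Z}^2$ with $\lambda(i),\lambda(i+1)$ linearly independent; it is non-singular if each pair $\lambda(i),\lambda(i+1)$ is a $\mathbb{Z}$-basis, and fan-giving if the cones $\operatorname{pos}\{\lambda(i),\lambda(i+1)\}$ together with their faces form a fan (here complete). Two characteristic maps over $C_5$ are Davis–Januszkiewicz equivalent if one is obtained from the other by applying some $R\in GL_2(\mathbb{Z})$. *)

From mathcomp Require Import all_boot all_order all_algebra.
Set Implicit Arguments. Unset Strict Implicit. Unset Printing Implicit Defensive.
Import GRing.Theory Num.Theory.
Local Open Scope ring_scope.

(* Vertices of C_5: Z_5 (vertex 5 of the paper is 0 here). *)
Definition vert := 'Z_5.

Definition zmap := vert -> 'cV[int]_2.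

Definition det2 (u v : 'cV[int]_2) : int := \det (row_mx u v : 'M[int]_2).

Definition is_charmap (lam : zmap) : Prop := forall i : vert, det2 (lam i) (lam (i + 1)) != 0.

Definition nonsingular (lam : zmap) : Prop :=
  forall i : vert, det2 (lam i) (lam (i + 1)) \is a GRing.unit.

Definition simplexC5 (S : {set vert}) : bool :=
  (#|S| <= 1)%N || [exists i : vert, S == [set i; i + 1]].

Definition in_cone (R : realFieldType) (lam : zmap) (S : {set vert}) (x : 'cV[R]_2) : Prop :=
  exists c : vert -> R, (forall k, 0 <= c k) /\ (forall k, k \notin S -> c k = 0) /\
    x = \sum_(k : vert) c k *: map_mx (fun z : int => z%:~R) (lam k).

Definition fan_giving (R : realFieldType) (lam : zmap) : Prop :=
  forall S T : {set vert}, simplexC5 S -> simplexC5 T ->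
    forall x : 'cV[R]_2, (in_cone lam S x /\ in_cone lam T x) <-> in_cone lam (S :&: T) x.

Definition complete_fan (R : realFieldType) (lam : zmap) : Prop :=
  forall x : 'cV[R]_2, exists i : vert, in_cone lam [set i; i + 1] x.

Definition DJ_equiv (lam mu : zmap) : Prop :=
  exists A : 'M[int]_2, A \in unitmx /\ forall v, mu v = A *m lam v.

Definition lamd (d : int) : 'M[int]_(2, 5) :=
  \matrix_(r < 2, c < 5)
    (if r == 0 :> nat then [:: 1; 0; -1; -1; d]`_c else [:: 0; 1; 1; 0; -1]`_c).

(* lambda_d of type (i,d): column k (0-based) goes to vertex i+k+1,
   i.e. vertex v receives column v - i - 1. *)
Definition typed (i : vert) (d : int) : zmap :=
  fun v => col (v - i - 1 : vert) (lamd d).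

From mathcomp Require Import all_boot all_order all_algebra.
From mathcomp Require Import ring lra zify.
Set Implicit Arguments.
Unset Strict Implicit.
Unset Printing Implicit Defensive.
Import Order.TTheory GRing.Theory Num.Theory.
Local Open Scope ring_scope.

(* For a map [lam] whose consecutive determinants det(lam v, lam (v+1)) all equal a
   sign [s], the integers a_v = s * det(lam v, lam (v+2)) satisfy
   lam v + lam (v+2) = a_v lam (v+1) and, by the Plucker relation, the frieze relation
   a_v a_(v+1) + a_(v+3) = 1; the sequence (a_v) determines [lam] up to GL_2(Z).
   A nonsingular fan has a constant orientation [s] and no two consecutive negative
   a_v (otherwise two opposite cones would overlap); with the frieze relation this
   forces some a_v = 0, after which (a_v) is a rotation of (d, 1, 1, 1 - d, 0), the
   sequence of lambda_d.  Conversely, when s = 1 and no two consecutive a_v are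
   negative, adjacent cones meet in their common ray and opposite cones only at 0,
   so each lambda_d is a fan; two typed maps are equivalent iff their rotated
   sequences agree. *)

(** * Plane determinants *)

Definition cross {R : comPzRingType} (u v : 'cV[R]_2) : R := \det (row_mx u v).

Section Cross.
Variable R : comPzRingType.
Implicit Types u v w z : 'cV[R]_2.

Lemma crossE u v : cross u v = u 0 0 * v 1 0 - u 1 0 * v 0 0.
Proof.
rewrite /cross (expand_det_row _ 0) !big_ord_recl big_ord0 /cofactor !det_mx11 !mxE.
have -> : lift (0 : 'I_2) 0 = 1 by apply/val_inj.
have -> : lift (1 : 'I_2) (0 : 'I_1) = 0 by apply/val_inj.
case: splitP => [j _|j]; last by case: j => [[]].
case: splitP => [j' |j' _]; first by case: j' => [[]].
rewrite !ord1 /= expr0 expr1; ring.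
Qed.

Lemma col2P u v : u 0 0 = v 0 0 -> u 1 0 = v 1 0 -> u = v.
Proof.
move=> h0 h1; apply/matrixP => i j; rewrite (ord1 j).
by case: i => [[|[|//]]] Hi; [rewrite (_ : Ordinal Hi = 0) | rewrite (_ : Ordinal Hi = 1)];
  try apply/val_inj.
Qed.

Lemma crossC u v : cross u v = - cross v u.
Proof. by rewrite !crossE; ring. Qed.

Lemma crossvv u : cross u u = 0.
Proof. by rewrite crossE; ring. Qed.

Lemma cross_combl a b u w z :
  cross (a *: u + b *: w) z = a * cross u z + b * cross w z.
Proof. by rewrite !crossE !mxE; ring. Qed.

Lemma cross_combr a b u w z :
  cross z (a *: u + b *: w) = a * cross z u + b * cross z w.
Proof. by rewrite !crossE !mxE; ring. Qed.

Lemma cross_cyclic u w z : cross u w *: z + cross w z *: u + cross z u *: w = 0.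
Proof. by apply: col2P; rewrite !mxE !crossE; ring. Qed.

Lemma cross_cyclicE u w z r : cross u w * z r 0 + cross w z * u r 0 = cross u z * w r 0.
Proof.
have := congr1 (fun M : 'cV[R]_2 => M r 0) (cross_cyclic u w z).
by rewrite !mxE (crossC z u) mulNr => /eqP; rewrite addr_eq0 opprK => /eqP.
Qed.

Lemma cross_recurrence (s : R) u w z : s * s = 1 -> cross u w = s -> cross w z = s ->
  u + z = (s * cross u z) *: w.
Proof.
move=> hs uw wz; apply/matrixP => r j; rewrite ord1 !mxE -mulrA -cross_cyclicE uw wz.
by rewrite -mulrDr mulrA hs mul1r addrC.
Qed.

Lemma cross_flip (s : R) u w z : s * s = 1 -> cross u w = s -> cross w z = - s ->
  z = u + (s * cross u z) *: w.
Proof.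
move=> hs uw wz; apply/matrixP => r j; rewrite ord1 !mxE -mulrA -cross_cyclicE uw wz.
by rewrite mulNr mulrDr mulrN !mulrA hs !mul1r addrC subrK.
Qed.

Lemma cross_plucker u0 u1 u2 u3 :
  cross u0 u2 * cross u1 u3 = cross u0 u1 * cross u2 u3 + cross u0 u3 * cross u1 u2.
Proof. by rewrite !crossE; ring. Qed.

Lemma cross_mulmx (A : 'M[R]_2) u v : cross (A *m u) (A *m v) = \det A * cross u v.
Proof. by rewrite /cross -mul_mx_row det_mulmx. Qed.

End Cross.

Lemma det2_cross (u v : 'cV[int]_2) : det2 u v = cross u v.
Proof. by []. Qed.

Lemma det2E (u v : 'cV[int]_2) : det2 u v = u 0 0 * v 1 0 - u 1 0 * v 0 0.
Proof. exact: crossE. Qed.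

Lemma det2_mulmx (A : 'M[int]_2) (u v : 'cV[int]_2) :
  det2 (A *m u) (A *m v) = \det A * det2 u v.
Proof. exact: cross_mulmx. Qed.

Lemma sqr_int_eq1 (s : int) : s * s = 1 -> s = 1 \/ s = -1.
Proof. by move/eqP; rewrite -expr2 sqrf_eq1 => /orP[]/eqP; [left|right]. Qed.

Lemma unit_int_sqr (s : int) : s \is a GRing.unit -> s * s = 1.
Proof. by rewrite qualifE /= => /orP[]/eqP->. Qed.

Definition realcol (R : realFieldType) (u : 'cV[int]_2) : 'cV[R]_2 :=
  map_mx (fun z : int => z%:~R) u.

Section RealCol.
Variable R : realFieldType.

Lemma realcol_comb (a b : int) (u w : 'cV[int]_2) :
  realcol R (a *: u + b *: w) = a%:~R *: realcol R u + b%:~R *: realcol R w.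
Proof. by apply/matrixP => i j; rewrite !mxE intrD !intrM. Qed.

Lemma cross_realcol (u v : 'cV[int]_2) :
  cross (realcol R u) (realcol R v) = (det2 u v)%:~R.
Proof. by change (det2 u v) with (cross u v); rewrite !crossE !mxE intrB !intrM. Qed.

Lemma realcol_eq0 (u : 'cV[int]_2) : realcol R u = 0 -> u = 0.
Proof.
move=> u0; apply/matrixP => i j; move/matrixP/(_ i j): u0.
by rewrite !mxE => /eqP; rewrite intr_eq0 => /eqP.
Qed.

End RealCol.

(** * The cycle C_5 *)

Lemma Z5_cases (k : vert) :
  k = 0 \/ k = 1 \/ k = 1 + 1 \/ k = 1 + 1 + 1 \/ k = 1 + 1 + 1 + 1.
Proof.
by case: k => [[|[|[|[|[|//]]]]]] ?; [left|right;left|right;right;left|do 3!right;left|do 4!right];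
  apply/val_inj.
Qed.

Lemma Z5_ind (P : vert -> Prop) : P 0 -> (forall v, P v -> P (v + 1)) -> forall v, P v.
Proof.
move=> P0 PS v; rewrite -(natr_Zp v); elim: (nat_of_ord v) => [//|n IH].
by rewrite -[n.+1]addn1 natrD; apply: PS.
Qed.

Lemma addZ5_five (v : vert) : v + 1 + 1 + 1 + 1 + 1 = v.
Proof. by apply/eqP; case: v => [[|[|[|[|[|//]]]]]] ?. Qed.

Lemma Z5_succ_neq (v : vert) : v != v + 1.
Proof. by case: v => [[|[|[|[|[|//]]]]]] ?. Qed.

Lemma edges_opposite_disjoint (v : vert) :
  [set v; v + 1] :&: [set v + 1 + 1; v + 1 + 1 + 1] = set0.
Proof. by apply/setP=> y; rewrite !inE; move: v y; do 2!case=> [[|[|[|[|[|//]]]]]] ?. Qed.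

Lemma ray_edge_disjoint (v : vert) :
  ([set v + 1 + 1] :&: [set v; v + 1] = set0) /\ ([set v] :&: [set v + 1; v + 1 + 1] = set0).
Proof. by split; apply/setP=> y; rewrite !inE; move: v y; do 2!case=> [[|[|[|[|[|//]]]]]] ?. Qed.

Lemma simplexC5_1 (a : vert) : simplexC5 [set a].
Proof. by rewrite /simplexC5 cards1. Qed.

Lemma simplexC5_2 (a : vert) : simplexC5 [set a; a + 1].
Proof. by apply/orP; right; apply/existsP; exists a. Qed.

Lemma simplexC5_sub (S : {set vert}) : simplexC5 S -> exists k, S \subset [set k; k + 1].
Proof.
case/orP => [S1|/existsP [i /eqP ->]]; last by exists i.
have [->|[a aS]] := set_0Vmem S; first by exists 0; rewrite sub0set.
exists a; apply/subsetP => b bS; rewrite !inE.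
by move/card_le1_eqP: S1 => /(_ b a bS aS) ->; rewrite eqxx.
Qed.

(** * Cones *)

Section PlaneCones.
Variable R : realFieldType.
Implicit Types (u w z x : 'cV[R]_2) (al be ga de : R).

Lemma cross_coefs u w a b a' b' : cross u w != 0 ->
  a *: u + b *: w = a' *: u + b' *: w -> a = a' /\ b = b'.
Proof.
move=> uw e; have /(congr1 (fun y => cross y w)) := e; have /(congr1 (cross u)) := e.
rewrite !cross_combl !cross_combr !crossvv !mulr0 !addr0 !add0r.
by move=> /(mulIf uw) -> /(mulIf uw) ->.
Qed.

Lemma cones_adjacent u w z x al be ga de : cross u w = 1 -> cross w z = 1 ->
  0 <= al -> 0 <= de -> x = al *: u + be *: w -> x = ga *: w + de *: z -> al = 0.
Proof.
move=> uw wz al0 de0 e1 e2.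
have := congr1 (fun y => cross y w) (etrans (esym e1) e2).
rewrite /= !cross_combl crossvv (crossC z) uw wz; lra.
Qed.

Lemma cones_opposite u0 u1 u2 u3 x al be ga de :
  cross u0 u1 = 1 -> cross u1 u2 = 1 -> cross u2 u3 = 1 ->
  0 <= cross u0 u2 \/ 0 <= cross u1 u3 ->
  0 <= al -> 0 <= be -> 0 <= ga -> 0 <= de ->
  x = al *: u0 + be *: u1 -> x = ga *: u2 + de *: u3 -> x = 0.
Proof.
move=> d01 d12 d23 convex al0 be0 ga0 de0 e1 e2.
have e := etrans (esym e1) e2.
have c1 := congr1 (fun y => cross y u1) e; have c2 := congr1 (fun y => cross y u2) e.
rewrite /= !cross_combl !crossvv (crossC u2 u1) (crossC u3 u1) (crossC u3 u2) d01 d12 d23 in c1 c2.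
have [al_0 be_0] : al = 0 /\ be = 0.
  case: convex => [a0|b0].
  - have ala := mulr_ge0 al0 a0; have de_0 : de = 0 by lra.
    by rewrite de_0 in c1; split; lra.
  - have deb := mulr_ge0 de0 b0; have al_0 : al = 0 by lra.
    by rewrite al_0 in c2; split; lra.
by rewrite e1 al_0 be_0 !scale0r addr0.
Qed.

End PlaneCones.

Section ConesOfMap.
Variables (R : realFieldType) (lam : zmap).
Implicit Types (S T : {set vert}) (x : 'cV[R]_2).
Local Notation lamR k := (realcol R (lam k)).

Lemma in_cone_sub S T x : S \subset T -> in_cone lam S x -> in_cone lam T x.
Proof.
move=> ST [c [c0 [cS ->]]]; exists c; split => //; split => // k kT.
by apply: cS; apply: contra kT; apply: (subsetP ST).
Qed.

Lemma in_cone_set0 x : in_cone lam set0 x -> x = 0.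
Proof. by move=> [c [_ [c0 ->]]]; rewrite big1 // => k _; rewrite c0 ?inE // scale0r. Qed.

Lemma in_cone0 S : in_cone lam S (0 : 'cV[R]_2).
Proof. by exists (fun=> 0 : R); do !split => //; rewrite big1 // => k _; rewrite scale0r. Qed.

Lemma sum_support2 a b S (c : vert -> R) : a != b -> S \subset [set a; b] ->
  (forall k, k \notin S -> c k = 0) ->
  \sum_k c k *: lamR k = c a *: lamR a + c b *: lamR b.
Proof.
move=> ab Sab cS; rewrite (bigD1 a) //= (bigD1 b) 1?eq_sym //= big1 ?addr0 // => k /andP[ka kb].
by rewrite cS ?scale0r //; apply: contra ka => /(subsetP Sab); rewrite !inE (negbTE kb) orbF.
Qed.

Lemma in_cone2P a b x : a != b ->
  in_cone lam [set a; b] x <->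
  exists al be : R, [/\ 0 <= al, 0 <= be & x = al *: lamR a + be *: lamR b].
Proof.
move=> ab; split=> [[c [c0 [cS ->]]]|[al [be [al0 be0 ->]]]].
  by exists (c a), (c b); rewrite (sum_support2 ab (subxx _) cS).
exists (fun k => if k == a then al else if k == b then be else 0); split; [|split].
- by move=> k; case: ifP => // _; case: ifP.
- by move=> k; rewrite !inE => /norP[/negbTE -> /negbTE ->].
rewrite (bigD1 a) //= (bigD1 b) 1?eq_sym //= big1 => [|k /andP[/negbTE -> /negbTE ->]].
  by rewrite eqxx eq_sym (negbTE ab) eqxx addr0.
by rewrite scale0r.
Qed.

Lemma in_cone1 a (al : R) : 0 <= al -> in_cone lam [set a] (al *: lamR a).
Proof.
move=> al0; exists (fun k => if k == a then al else 0); split; [|split].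
- by move=> k; case: ifP.
- by move=> k; rewrite inE => /negbTE ->.
rewrite (bigD1 a) //= eqxx big1 ?addr0 // => k /negbTE ->.
by rewrite scale0r.
Qed.

Lemma in_cone2_int a b (al be : int) : a != b -> 0 <= al -> 0 <= be ->
  in_cone lam [set a; b] (realcol R (al *: lam a + be *: lam b)).
Proof.
by move=> ab al0 be0; apply/in_cone2P => //; exists al%:~R, be%:~R; rewrite !ler0z realcol_comb.
Qed.

Lemma in_cone_face k S T x : det2 (lam k) (lam (k + 1)) != 0 ->
  S \subset [set k; k + 1] -> T \subset [set k; k + 1] ->
  in_cone lam S x -> in_cone lam T x -> in_cone lam (S :&: T) x.
Proof.
move=> nz Sk Tk [c [c0 [cS ->]]] [c' [_ [cT ex]]].
have kk := Z5_succ_neq k.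
rewrite (sum_support2 kk Sk cS) (sum_support2 kk Tk cT) in ex.
have nzR : cross (lamR k) (lamR (k + 1)) != 0 by rewrite cross_realcol intr_eq0.
have [ck ck1] := cross_coefs nzR ex.
exists c; split => //; split => // m; rewrite inE negb_and => /orP[mS|mT]; first exact: cS.
have [mS|/cS//] := boolP (m \in S).
by move: (subsetP Sk m mS) mT; rewrite !inE => /orP[]/eqP-> /cT; rewrite ?ck ?ck1.
Qed.

Lemma fan_disjoint_cones S T x : fan_giving R lam -> simplexC5 S -> simplexC5 T ->
  S :&: T = set0 -> in_cone lam S x -> in_cone lam T x -> x = 0.
Proof.
by move=> F sS sT ST hS hT; apply: in_cone_set0; rewrite -ST; apply/(F S T sS sT x).
Qed.

End ConesOfMap.

Definition det_skip (lam : zmap) (v : vert) : int := det2 (lam v) (lam (v + 1 + 1)).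

Section UnimodularFan.
Variables (R : realFieldType) (lam : zmap).
Hypothesis unimodular : forall v, det2 (lam v) (lam (v + 1)) = 1.
Hypothesis skip_nonneg : forall v, 0 <= det_skip lam v \/ 0 <= det_skip lam (v + 1).
Implicit Types x : 'cV[R]_2.
Local Notation lamR k := (realcol R (lam k)).

Let crossR v : cross (lamR v) (lamR (v + 1)) = 1.
Proof. by rewrite cross_realcol unimodular. Qed.

Lemma adjacent_cones_meet v x : in_cone lam [set v; v + 1] x ->
  in_cone lam [set v + 1; v + 1 + 1] x -> in_cone lam [set v + 1] x.
Proof.
move=> /(in_cone2P _ _ (Z5_succ_neq _)) [al [be [al0 be0 e1]]].
move=> /(in_cone2P _ _ (Z5_succ_neq _)) [ga [de [_ de0 e2]]].
have al_0 := cones_adjacent (crossR _) (crossR _) al0 de0 e1 e2.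
by rewrite e1 al_0 scale0r add0r; apply: in_cone1.
Qed.

Lemma opposite_cones_meet v x : in_cone lam [set v; v + 1] x ->
  in_cone lam [set v + 1 + 1; v + 1 + 1 + 1] x -> x = 0.
Proof.
move=> /(in_cone2P _ _ (Z5_succ_neq _)) [al [be [al0 be0 e1]]].
move=> /(in_cone2P _ _ (Z5_succ_neq _)) [ga [de [ga0 de0 e2]]].
apply: (cones_opposite (crossR _) (crossR _) (crossR _) _ al0 be0 ga0 de0 e1 e2).
by rewrite !cross_realcol !ler0z; apply: skip_nonneg.
Qed.

Lemma edge_cones_meet j k x : in_cone lam [set j; j + 1] x -> in_cone lam [set k; k + 1] x ->
  in_cone lam ([set j; j + 1] :&: [set k; k + 1]) x.
Proof.
move=> hj hk; have [t ek] : exists t, k = j + t by exists (k - j); rewrite addrC subrK.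
have sub1 (a : vert) : [set a + 1] \subset [set a; a + 1] :&: [set a + 1; a + 1 + 1].
  by rewrite subsetI !sub1set !inE !eqxx !orbT.
have [|[|[|[|]]]] := Z5_cases t => et; subst t k.
- by rewrite addr0 setIid.
- exact: in_cone_sub (sub1 j) (adjacent_cones_meet hj hk).
- by rewrite addrA in hk *; rewrite (opposite_cones_meet hj hk); apply: in_cone0.
- set k := j + (1 + 1 + 1) in hk *; have ej : j = k + 1 + 1 by rewrite /k !addrA addZ5_five.
  clearbody k; subst j.
  by rewrite (opposite_cones_meet hk hj); apply: in_cone0.
- set k := j + (1 + 1 + 1 + 1) in hk *; have ej : j = k + 1 by rewrite /k !addrA addZ5_five.
  clearbody k; subst j.
  by rewrite setIC; apply: in_cone_sub (sub1 k) (adjacent_cones_meet hk hj).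
Qed.

Lemma fan_giving_unimodular : fan_giving R lam.
Proof.
move=> S T sS sT x; split=> [[hS hT]|hST]; last first.
  by split; apply: in_cone_sub hST; [apply: subsetIl | apply: subsetIr].
have [k Sk] := simplexC5_sub sS; have [j Tj] := simplexC5_sub sT.
have hE := edge_cones_meet (in_cone_sub Sk hS) (in_cone_sub Tj hT).
have nz v : det2 (lam v) (lam (v + 1)) != 0 by rewrite unimodular.
have h1 := in_cone_face (nz k) Sk (subsetIl _ _) hS hE.
have h2 := in_cone_face (nz j) (subset_trans (subsetIr _ _) (subsetIr _ _)) Tj h1 hT.
by apply: in_cone_sub h2; apply/subsetP => y; rewrite !inE => /andP[/andP[-> _] ->].
Qed.

End UnimodularFan.

(** * The maps lambda_d *)

Section TypedMaps.
Variables (i : vert) (d : int).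
Implicit Types k v : vert.

Lemma typed_col k : typed i d (i + k) = col (k - 1) (lamd d).
Proof. by rewrite /typed (addrC i) addrK. Qed.

Lemma det2_typed v : det2 (typed i d v) (typed i d (v + 1)) = 1.
Proof.
have -> : v = i + (v - i) by rewrite addrC subrK.
rewrite -addrA !typed_col addrK det2E.
by case: (Z5_cases (v - i)) => [|[|[|[|]]]] ->; rewrite !mxE /=; ring.
Qed.

Lemma det_skip_typed k : det_skip (typed i d) (i + k) = [:: d; 1; 1; 1 - d; 0]`_k.
Proof.
rewrite /det_skip -!addrA !typed_col det2E.
by case: (Z5_cases k) => [|[|[|[|]]]] ->; rewrite !mxE /=; ring.
Qed.

Lemma det_skip_typed_nonneg v :
  0 <= det_skip (typed i d) v \/ 0 <= det_skip (typed i d) (v + 1).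
Proof.
have -> : v = i + (v - i) by rewrite addrC subrK.
rewrite -addrA !det_skip_typed.
by case: (Z5_cases (v - i)) => [|[|[|[|]]]] ->; [right|left|left|right|left].
Qed.

Lemma complete_typed (R : realFieldType) : complete_fan R (typed i d).
Proof.
move=> x; set x0 := x 0 0; set x1 := x 1 0; set dR : R := d%:~R.
have cone k (al be : R) : 0 <= al -> 0 <= be ->
    x0 = al * (lamd d 0 (k - 1))%:~R + be * (lamd d 0 k)%:~R ->
    x1 = al * (lamd d 1 (k - 1))%:~R + be * (lamd d 1 k)%:~R ->
    exists v, in_cone (typed i d) [set v; v + 1] x.
  move=> al0 be0 e0 e1; exists (i + k); apply/in_cone2P; first exact: Z5_succ_neq.
  exists al, be; split => //; rewrite !mxE in e0 e1.
  by apply: col2P; rewrite -addrA !typed_col addrK !mxE; [rewrite -/x0 e0 | rewrite -/x1 e1].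
have [x1_ge0|x1_lt0] := lerP 0 x1.
  have [x0_ge0|x0_lt0] := lerP 0 x0.
    by apply: (cone 1 x0 x1) => //; rewrite !mxE /=; ring.
  have [|] := lerP 0 (x0 + x1) => s.
    by apply: (cone (1 + 1) (x0 + x1) (- x0)); rewrite ?mxE /=; lra.
  by apply: (cone (1 + 1 + 1) x1 (- x0 - x1)); rewrite ?mxE /=; lra.
have [|] := lerP 0 (x0 + dR * x1) => s.
  by apply: (cone 0 (- x1) (x0 + dR * x1)); rewrite ?mxE /= ?intrN; lra.
by apply: (cone (1 + 1 + 1 + 1) (- x0 - dR * x1) (- x1)); rewrite ?mxE /= ?intrN; lra.
Qed.

End TypedMaps.

Lemma det_skip_typed_shift (i t k : vert) (d : int) :
  det_skip (typed (i + t) d) (i + k) = [:: d; 1; 1; 1 - d; 0]`_(k - t)%R.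
Proof.
have -> : i + k = i + t + (k - t) by rewrite -addrA [t + _]addrC subrK.
exact: det_skip_typed.
Qed.

(** * Classification of nonsingular fans *)

Section FanOrientation.
Variables (R : realFieldType) (lam : zmap).
Hypothesis fan : fan_giving R lam.

Lemma fan_orientation_step v (s : int) : s * s = 1 ->
  det2 (lam v) (lam (v + 1)) = s -> det2 (lam (v + 1)) (lam (v + 1 + 1)) != - s.
Proof.
move=> hs D0; apply/eqP => D1.
have s_neq0 : s != 0 by case: (sqr_int_eq1 hs) => ->.
(* A flip of orientation puts [lam (v + 2)] in the cone of [lam v], [lam (v + 1)] or
   [lam v] in the cone of [lam (v + 1)], [lam (v + 2)]. *)
have := cross_flip hs D0 D1; rewrite -det2_cross; set b := s * det2 _ _ => ez.
have [b_ge0|b_lt0] := lerP 0 b.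
- have hT := in_cone2_int R lam (Z5_succ_neq v) ler01 b_ge0; rewrite scale1r -ez in hT.
  have hS : in_cone lam [set v + 1 + 1] (realcol R (lam (v + 1 + 1))).
    by rewrite -[realcol _ _]scale1r; apply: in_cone1.
  have z0 := realcol_eq0 (fan_disjoint_cones fan (simplexC5_1 _) (simplexC5_2 _)
    (ray_edge_disjoint v).1 hS hT).
  by move: s_neq0; rewrite -oppr_eq0 -D1 z0 det2E !mxE !mulr0 subrr.
- have eu : lam v = (- b) *: lam (v + 1) + 1 *: lam (v + 1 + 1).
    by rewrite ez scale1r scaleNr addrCA addNr addr0.
  have nb : 0 <= - b by rewrite oppr_ge0 ltW.
  have hT := in_cone2_int R lam (Z5_succ_neq (v + 1)) nb ler01; rewrite -eu in hT.
  have hS : in_cone lam [set v] (realcol R (lam v)).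
    by rewrite -[realcol _ _]scale1r; apply: in_cone1.
  have u0 := realcol_eq0 (fan_disjoint_cones fan (simplexC5_1 _) (simplexC5_2 _)
    (ray_edge_disjoint v).2 hS hT).
  by move: s_neq0; rewrite -D0 u0 det2E !mxE !mul0r subrr.
Qed.

Lemma fan_orientation : nonsingular lam ->
  exists2 s : int, s * s = 1 & forall v, det2 (lam v) (lam (v + 1)) = s.
Proof.
move=> ns; set s := det2 (lam 0) (lam (0 + 1)).
have hs : s * s = 1 := unit_int_sqr (ns 0).
exists s => //; apply: Z5_ind => // v Dv; have := fan_orientation_step hs Dv.
by case: (sqr_int_eq1 (unit_int_sqr (ns (v + 1)))) => ->; case: (sqr_int_eq1 hs) => ->.
Qed.

End FanOrientation.

Section ConstantOrientation.
Variables (R : realFieldType) (lam : zmap) (s : int).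
Hypotheses (hs : s * s = 1) (Dlam : forall v, det2 (lam v) (lam (v + 1)) = s).

Lemma skip_recurrence v : lam v + lam (v + 1 + 1) = (s * det_skip lam v) *: lam (v + 1).
Proof. exact: cross_recurrence hs (Dlam v) (Dlam (v + 1)). Qed.

Lemma skip_frieze v :
  s * det_skip lam v * (s * det_skip lam (v + 1)) + s * det_skip lam (v + 1 + 1 + 1) = 1.
Proof.
have D w : cross (lam w) (lam (w + 1)) = s := Dlam w.
rewrite /det_skip !det2_cross addZ5_five mulrACA hs mul1r cross_plucker !D.
by rewrite (crossC (lam (v + 1 + 1 + 1))) hs; ring.
Qed.

Lemma skip_no_two_negative : fan_giving R lam ->
  forall v, ~ (s * det_skip lam v < 0 /\ s * det_skip lam (v + 1) < 0).
Proof.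
move=> fan v [b0_lt0 b1_lt0].
(* Then -(lam (v + 1) + lam (v + 2)) is in the cones of the opposite edges
   {v, v + 1} and {v + 2, v + 3}. *)
have r0 := skip_recurrence v; have r1 := skip_recurrence (v + 1).
move: b0_lt0 b1_lt0 r0 r1; set b0 := s * _; set b1 := s * _ => b0_lt0 b1_lt0 r0 r1.
have nb0 : 0 <= - b0 - 1 by lia.
have nb1 : 0 <= - b1 - 1 by lia.
have ey : 1 *: lam v + (- b0 - 1) *: lam (v + 1) =
          (- b1 - 1) *: lam (v + 1 + 1) + 1 *: lam (v + 1 + 1 + 1).
  apply/colP => r; move: (congr1 (fun M : 'cV[int]_2 => M r 0) r0).
  move: (congr1 (fun M : 'cV[int]_2 => M r 0) r1); rewrite !mxE.
  (* [set] merges the copies of each entry elaborated at different structure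
     instances, which [lia] would otherwise take for distinct atoms. *)
  set x0 := lam v r 0; set x1 := lam (v + 1) r 0; set x2 := lam (v + 1 + 1) r 0.
  set x3 := lam (v + 1 + 1 + 1) r 0; lia.
have hS := in_cone2_int R lam (Z5_succ_neq v) ler01 nb0; rewrite ey in hS.
have hT := in_cone2_int R lam (Z5_succ_neq (v + 1 + 1)) nb1 ler01.
have y0 := realcol_eq0 (fan_disjoint_cones fan (simplexC5_2 _) (simplexC5_2 _)
  (edges_opposite_disjoint v) hS hT).
have u2E : lam (v + 1 + 1) = - lam (v + 1).
  apply/colP => r; move: (congr1 (fun M : 'cV[int]_2 => M r 0) y0).
  move: (congr1 (fun M : 'cV[int]_2 => M r 0) r1); rewrite !mxE.
  set x1 := lam (v + 1) r 0; set x2 := lam (v + 1 + 1) r 0.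
  set x3 := lam (v + 1 + 1 + 1) r 0; lia.
have : s = 0 by rewrite -(Dlam (v + 1)) u2E det2E !mxE; ring.
by apply/eqP; case: (sqr_int_eq1 hs) => ->.
Qed.

End ConstantOrientation.

Lemma frieze_has_zero (b : vert -> int) :
  (forall v, b v * b (v + 1) + b (v + 1 + 1 + 1) = 1) ->
  (forall v, ~ (b v < 0 /\ b (v + 1) < 0)) -> exists v, b v = 0.
Proof.
move=> frieze no_neg.
have [v /eqP|nz] := pickP [pred v | b v == 0]; first by exists v.
have {}nz v : b v != 0 by apply/negbT/nz.
exfalso; have [v /= bv_lt0|nonneg] := pickP [pred v | b v < 0].
  (* b (v + 2) = 1 - b (v - 1) * b v >= 2, so b (v - 1) = 1 - b (v + 1) * b (v + 2) < 0. *)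
  set u := v + 1 + 1 + 1 + 1; have uv : u + 1 = v by rewrite /u addZ5_five.
  have := frieze u; have := frieze (v + 1); rewrite -/u uv.
  have := no_neg v; have := no_neg u; rewrite uv.
  by have := nz (v + 1); have := nz u; nia.
have pos v : 0 < b v by rewrite lt0r nz leNgt; apply/negbT/nonneg.
have := frieze 0; have := pos 0; have := pos (0 + 1); have := pos (0 + 1 + 1 + 1).
by move: (b 0) (b (0 + 1)) (b (0 + 1 + 1 + 1)); nia.
Qed.

Lemma recurrence_unique (lam mu : zmap) (b : vert -> int) (A : 'M[int]_2) v0 :
  (forall v, lam v + lam (v + 1 + 1) = b v *: lam (v + 1)) ->
  (forall v, mu v + mu (v + 1 + 1) = b v *: mu (v + 1)) ->
  A *m lam v0 = mu v0 -> A *m lam (v0 + 1) = mu (v0 + 1) -> forall v, A *m lam v = mu v.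
Proof.
move=> rec_lam rec_mu h0 h1.
have next (nu : zmap) v : (forall v, nu v + nu (v + 1 + 1) = b v *: nu (v + 1)) ->
    nu (v + 1 + 1) = b v *: nu (v + 1) - nu v.
  by move=> rec; rewrite -rec [nu v + _]addrC addrK.
suff step t : A *m lam (v0 + t) = mu (v0 + t) /\ A *m lam (v0 + t + 1) = mu (v0 + t + 1).
  by move=> v; have [] := step (v - v0); rewrite addrC subrK.
elim/Z5_ind: t => [|t [ht ht1]]; first by rewrite addr0.
rewrite addrA; split => //.
by rewrite (next lam) // (next mu) // mulmxBr -scalemxAr ht ht1.
Qed.

Lemma DJ_equiv_det_skip (lam mu : zmap) :
  (forall v, det2 (lam v) (lam (v + 1)) = 1) -> (forall v, det2 (mu v) (mu (v + 1)) = 1) ->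
  DJ_equiv lam mu -> det_skip lam =1 det_skip mu.
Proof.
move=> Dlam Dmu [A [_ AL]].
have detA : \det A = 1 by have := Dmu 0; rewrite !AL det2_mulmx Dlam mulr1.
by move=> v; rewrite /det_skip !AL det2_mulmx detA mul1r.
Qed.

Lemma DJ_equiv_of_det_skip (lam mu : zmap) (s : int) : s * s = 1 ->
  (forall v, det2 (lam v) (lam (v + 1)) = s) -> (forall v, det2 (mu v) (mu (v + 1)) = 1) ->
  (forall v, s * det_skip lam v = det_skip mu v) -> DJ_equiv lam mu.
Proof.
move=> hs Dlam Dmu eb.
set L := row_mx (lam 0) (lam (0 + 1)); set M := row_mx (mu 0) (mu (0 + 1)).
have unit_det (N : 'M[int]_2) : \det N * \det N = 1 -> N \in unitmx.
  by move=> h; rewrite unitmxE; apply/unitrP; exists (\det N).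
have L_unit : L \in unitmx by apply: unit_det; rewrite [\det L](Dlam 0).
have M_unit : M \in unitmx by apply: unit_det; rewrite [\det M](Dmu 0) mulr1.
set A := M *m invmx L; exists A; split; first by rewrite unitmx_mul M_unit unitmx_inv.
have : A *m L = M by rewrite -mulmxA mulVmx ?mulmx1.
rewrite /L /M mul_mx_row => /eq_row_mx[h0 h1].
move=> v; apply/esym; move: v; apply: (recurrence_unique (b := det_skip mu) _ _ h0 h1) => v.
  by rewrite -eb (skip_recurrence hs Dlam).
by rewrite -[det_skip mu v]mul1r (skip_recurrence (mulr1 1) Dmu).
Qed.

Lemma DJ_equiv_unimodularP (lam mu : zmap) :
  (forall v, det2 (lam v) (lam (v + 1)) = 1) -> (forall v, det2 (mu v) (mu (v + 1)) = 1) ->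
  DJ_equiv lam mu <-> det_skip lam =1 det_skip mu.
Proof.
move=> Dlam Dmu; split; first exact: DJ_equiv_det_skip.
by move=> eq_skip; apply: (DJ_equiv_of_det_skip (mulr1 1) Dlam Dmu) => v; rewrite mul1r.
Qed.

Lemma typed_properties (R : realFieldType) i d :
  [/\ is_charmap (typed i d), nonsingular (typed i d),
      fan_giving R (typed i d) & complete_fan R (typed i d)].
Proof.
split=> [v|v||]; rewrite ?det2_typed ?oner_neq0 ?unitr1 //; last exact: complete_typed.
exact: fan_giving_unimodular (det2_typed i d) (det_skip_typed_nonneg i d).
Qed.

Lemma fan_DJ_equiv_typed (R : realFieldType) (lam : zmap) :
  nonsingular lam -> fan_giving R lam -> exists i d, DJ_equiv lam (typed i d).
Proof.
move=> ns fan; have [s hs Dlam] := fan_orientation fan ns.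
have frz := skip_frieze hs Dlam.
have [v /= b0] := frieze_has_zero (b := fun w => s * det_skip lam w) frz
  (skip_no_two_negative hs Dlam fan).
have b3 : s * det_skip lam (v + 1 + 1 + 1) = 1 by have := frz v; rewrite b0 mul0r add0r.
have b2 : s * det_skip lam (v + 1 + 1) = 1.
  by have := frz (v + 1 + 1 + 1 + 1); rewrite !addZ5_five b0 mulr0 add0r.
have b4 : s * det_skip lam (v + 1 + 1 + 1 + 1) = 1 - s * det_skip lam (v + 1).
  by rewrite -(frz (v + 1)) b2 mulr1 [_ + s * det_skip lam _]addrC addrK.
exists (v + 1), (s * det_skip lam (v + 1)).
apply: (DJ_equiv_of_det_skip hs Dlam (det2_typed _ _)) => w.
have -> : w = v + 1 + (w - (v + 1)) by rewrite addrC subrK.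
rewrite det_skip_typed; case: (Z5_cases (w - (v + 1))) => [|[|[|[|]]]] ->;
  by rewrite /= ?addr0 ?addrA ?addZ5_five ?b0 ?b2 ?b3 ?b4.
Qed.

Lemma typed_DJ_equivP i j d e :
  DJ_equiv (typed i d) (typed j e) <->
  [\/ i = j /\ d = e, [/\ d = 0, j = i + 1 & e = 1] | [/\ e = 0, i = j + 1 & d = 1]].
Proof.
apply: (iff_trans (DJ_equiv_unimodularP (det2_typed i d) (det2_typed j e))).
have shift1 k : det_skip (typed k 0) =1 det_skip (typed (k + 1) 1).
  move=> w; have -> : w = k + (w - k) by rewrite addrC subrK.
  rewrite det_skip_typed det_skip_typed_shift.
  by case: (Z5_cases (w - k)) => [|[|[|[|]]]] ->.
split=> [eq_skip|]; last first.
  by case=> [[-> ->] | [-> -> ->] | [-> -> ->] w] //; rewrite shift1.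
have [t et] : exists t, j = i + t by exists (j - i); rewrite addrC subrK.
subst j; have E (k : vert) : [:: d; 1; 1; 1 - d; 0]`_k = [:: e; 1; 1; 1 - e; 0]`_(k - t)%R.
  by rewrite -(det_skip_typed i) -(det_skip_typed_shift i) eq_skip.
move: (E 0) (E 1) (E (1 + 1)) (E (1 + 1 + 1)) (E (1 + 1 + 1 + 1)).
case: (Z5_cases t) => [|[|[|[|]]]] -> /= E0 E1 E2 E3 E4.
- by apply: Or31; rewrite addr0.
- by apply: Or32.
- by move: E1.
- by move: E2.
- by apply: Or33; rewrite ?addrA ?addZ5_five //; lia.
Qed.

Theorem lemma6p7 (R : realFieldType) :
  (forall (i : vert) (d : int),
     [/\ is_charmap (typed i d), nonsingular (typed i d),
         fan_giving R (typed i d) & complete_fan R (typed i d)])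
  /\ (forall lam : zmap,
        is_charmap lam -> nonsingular lam -> fan_giving R lam -> complete_fan R lam ->
        exists (i : vert) (d : int), DJ_equiv lam (typed i d))
  /\ (forall (i j : vert) (d e : int),
        DJ_equiv (typed i d) (typed j e) <->
        [\/ i = j /\ d = e,
            [/\ d = 0, j = i + 1 & e = 1]
          | [/\ e = 0, i = j + 1 & d = 1]]).
Proof.
split; first exact: typed_properties.
split; last exact: typed_DJ_equivP.
by move=> lam _ ns fan _; apply: fan_DJ_equiv_typed ns fan.
Qed.
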